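(* Let $n\ge 1$, let $\mathbf r\in\mathbb{R}^n$ have all entries negative, let $\lambda>0$, let $\mathbf R = \operatorname{diag}(\exp(-\mathbf r/\lambda))$, let $\mathbf P$ be an $n\times n$ row-stochastic matrix, let $\tilde{\mathbf P} = (\mathbf P+\mathbf P^\top)/2$, and assume $\mathbf R - \tilde{\mathbf P}$ is invertible. Fix an index $s_T\in\{1,\dots,n\}$ (corresponding to a terminal state). Consider the problem $$\min_{\mathbf v\in\mathbb{R}^n} \exp(\mathbf v)^\top(\mathbf R - \tilde{\mathbf P})\exp(\mathbf v) \quad\text{subject to}\quad v(s_T) = 0 .$$ If $\mathbf v^*$ is a minimizer of this problem, then there is a scalar $\alpha\in\mathbb{R}$ such that $$\exp(\mathbf v^* ) = \alpha\,(\mathbf R - \tilde{\mathbf P})^{-1}\mathbf b_{s_T},$$ i.e., $\mathbf v^*$ is the entrywise logarithm of a scalar multiple of the column of the symmetrized default representation $(\mathbf R - \tilde{\mathbf P})^{-1}$ corresponding to $s_T$.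
   Context: $\exp$, $\log$ and $\operatorname{diag}$ act entrywise; $\mathbf b_{s_T}$ is the standard basis vector with a $1$ in entry $s_T$. The matrix $(\mathbf R - \tilde{\mathbf P})^{-1}$ is called the (symmetrized) default representation (DR), where $\mathbf r$ is the vector of state rewards and $\mathbf P$ the transition matrix induced by a default policy. *)

From HB Require Import structures.
From mathcomp Require Import all_boot all_order all_algebra.
From mathcomp Require Import all_classical all_reals all_analysis.
Set Implicit Arguments. Unset Strict Implicit. Unset Printing Implicit Defensive.
Import Order.TTheory GRing.Theory Num.Theory.
Local Open Scope ring_scope.

(* R : realType. Indices s_T range over 'I_n (0-based). *)

Definition expv (R : realType) (n : nat) (v : 'cV[R]_n) : 'cV[R]_n :=
  \col_i expR (v i 0).

Definition row_stochastic (R : realType) (n : nat) (P : 'M[R]_n) : Prop :=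
  (forall i j, 0 <= P i j) /\ (forall i, \sum_j P i j = 1).

Definition reward_mx (R : realType) (n : nat) (r : 'cV[R]_n) (lam : R) : 'M[R]_n :=
  diag_mx (\row_i expR (- r i 0 / lam)).

Definition sym_mx (R : realType) (n : nat) (P : 'M[R]_n) : 'M[R]_n :=
  (2%:R)^-1 *: (P + P^T).

Definition dr_objective (R : realType) (n : nat) (M : 'M[R]_n) (v : 'cV[R]_n) : R :=
  ((expv v)^T *m M *m expv v) 0 0.

Definition basis_vec (R : realType) (n : nat) (s : 'I_n) : 'cV[R]_n :=
  \col_i (if i == s then 1 else 0).

Definition is_constrained_minimizer (R : realType) (n : nat) (M : 'M[R]_n)
    (s : 'I_n) (v : 'cV[R]_n) : Prop :=
  v s 0 = 0 /\ forall w : 'cV[R]_n, w s 0 = 0 -> dr_objective M v <= dr_objective M w.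

From HB Require Import structures.
From mathcomp Require Import all_boot all_order all_algebra.
From mathcomp Require Import all_classical all_reals all_analysis.
From mathcomp Require Import ring lra.
Set Implicit Arguments. Unset Strict Implicit. Unset Printing Implicit Defensive.
Import Order.TTheory GRing.Theory Num.Theory.
Local Open Scope ring_scope.

(* For i <> s_T the constraint does not involve v(i), and moving the entry exp(v)(i)
   to exp(v)(i) + u changes the symmetric quadratic form by
   2u ((R - P~) exp v)(i) + u^2 (R - P~)(i,i); minimality of v* at u = 0 forces
   the linear coefficient to vanish.  So (R - P~) exp v* is supported on s_T, i.e.
   it is a multiple of b_{s_T}, and multiplying by the inverse gives the claim. *)

Lemma symmetric_quad_form_addZdelta (R : comNzRingType) (n : nat) (M : 'M[R]_n)
    (x : 'cV[R]_n) (i : 'I_n) (u : R) :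
  M^T = M ->
  ((x + u *: delta_mx i 0)^T *m M *m (x + u *: delta_mx i 0)) 0 0 =
  (x^T *m M *m x) 0 0 + 2 * u * (M *m x) i 0 + u ^+ 2 * M i i.
Proof.
move=> symM.
have xMe : (x^T *m M *m delta_mx i (0 : 'I_1)) 0 0 = (M *m x) i 0.
  by rewrite -colE mxE -{1}symM -trmx_mul mxE.
have eMx : (delta_mx (0 : 'I_1) i *m M *m x) 0 0 = (M *m x) i 0.
  by rewrite -rowE -row_mul mxE.
have eMe : (delta_mx (0 : 'I_1) i *m M *m delta_mx i (0 : 'I_1)) 0 0 = M i i.
  by rewrite -rowE -colE !mxE.
have -> : (x + u *: delta_mx i 0)^T = x^T + u *: delta_mx 0 i.
  by rewrite linearD /= linearZ /= trmx_delta.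
rewrite !mulmxDl !mulmxDr -!scalemxAl -!scalemxAr.
move: xMe eMx eMe; set xMx := x^T *m M *m x; set xMe := x^T *m M *m _.
set eMx := _ *m M *m x; set eMe := _ *m M *m delta_mx i 0.
move=> xMeE eMxE eMeE; set Mx_i := (M *m x) i 0 in xMeE eMxE *.
clearbody xMx xMe eMx eMe Mx_i.
by rewrite !mxE xMeE eMxE eMeE; ring.
Qed.

Lemma linear_coef_eq0_of_local_min (R : realFieldType) (a g m : R) : 0 < a ->
  (forall u, `|u| < a -> 0 <= 2 * u * g + u ^+ 2 * m) -> g = 0.
Proof.
move=> a_gt0 local_min; apply/eqP; apply: contraT => g_neq0.
(* At u = -g/D the quadratic is g^2 (m - 2D) / D^2 < 0; the summand |g|/a makes |u| < a. *)
pose D := `|m| + 1 + `|g| / a.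
have ga_ge0 : 0 <= `|g| / a by rewrite divr_ge0 // ltW.
have m_le : m <= `|m| := ler_norm m.
have m_abs_ge0 : 0 <= `|m| := normr_ge0 m.
have D_gt0 : 0 < D by rewrite /D; lra.
have u_small : `|- g / D| < a.
  rewrite normf_div normrN (gtr0_norm D_gt0) ltr_pdivrMr // mulrC -ltr_pdivrMr //.
  by rewrite /D; lra.
have := local_min _ u_small.
have -> : 2 * (- g / D) * g + (- g / D) ^+ 2 * m = g ^+ 2 / D ^+ 2 * (m - 2 * D).
  by field; rewrite gt_eqF.
have g2_gt0 : 0 < g ^+ 2 by rewrite exprn_even_gt0 // g_neq0 orbT.
rewrite (pmulr_rge0 _ (divr_gt0 g2_gt0 (exprn_gt0 2 D_gt0))).
by rewrite /D; lra.
Qed.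

Lemma expv_set_coord (R : realType) (n : nat) (v : 'cV[R]_n) (i : 'I_n) (y : R) :
  0 < y ->
  expv (v + (ln y - v i 0) *: delta_mx i 0) = expv v + (y - expR (v i 0)) *: delta_mx i 0.
Proof.
move=> y_gt0; apply/matrixP => j k; rewrite (ord1 k) !mxE.
have [->|_] := eqVneq j i; last by rewrite !mulr0 !addr0.
by rewrite !mulr1 addrC subrK lnK ?posrE // addrC subrK.
Qed.

Lemma constrained_minimizer_stationary (R : realType) (n : nat) (M : 'M[R]_n)
    (s : 'I_n) (v : 'cV[R]_n) :
  M^T = M -> is_constrained_minimizer M s v ->
  forall i, i != s -> (M *m expv v) i 0 = 0.
Proof.
move=> symM [vs0 v_min] i i_neq_s.
have x_iE : expv v i 0 = expR (v i 0) by rewrite mxE.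
have x_i_gt0 : 0 < expv v i 0 by rewrite x_iE expR_gt0.
apply: (@linear_coef_eq0_of_local_min _ _ _ (M i i) x_i_gt0) => u u_small.
have y_gt0 : 0 < expR (v i 0) + u.
  by move: u_small; rewrite x_iE; have := ler_norm (- u); rewrite normrN; lra.
pose w := v + (ln (expR (v i 0) + u) - v i 0) *: delta_mx i 0.
have ws0 : w s 0 = 0 by rewrite !mxE vs0 eq_sym (negPf i_neq_s) mulr0 addr0.
have := v_min w ws0.
rewrite /dr_objective expv_set_coord // [expR _ + u]addrC addrK.
by rewrite symmetric_quad_form_addZdelta //; lra.
Qed.

Lemma col_supported_at (R : realType) (n : nat) (s : 'I_n) (y : 'cV[R]_n) :
  (forall i, i != s -> y i 0 = 0) -> y = y s 0 *: basis_vec R s.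
Proof.
move=> y_off_s; apply/matrixP => i k; rewrite (ord1 k) !mxE.
by have [->|/y_off_s ->] := eqVneq i s; rewrite ?mulr1 ?mulr0.
Qed.

Lemma tr_reward_mx (R : realType) (n : nat) (r : 'cV[R]_n) (lam : R) :
  (reward_mx r lam)^T = reward_mx r lam.
Proof. exact: tr_diag_mx. Qed.

Lemma tr_sym_mx (R : realType) (n : nat) (P : 'M[R]_n) : (sym_mx P)^T = sym_mx P.
Proof. by rewrite /sym_mx linearZ /= linearD /= trmxK addrC. Qed.

Theorem proposition3p10 (R : realType) (n : nat) (hn : (1 <= n)%N)
  (r : 'cV[R]_n) (hr : forall i, r i 0 < 0) (lam : R) (hlam : 0 < lam)
  (P : 'M[R]_n) (hP : row_stochastic P)
  (hinv : reward_mx r lam - sym_mx P \in unitmx)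
  (sT : 'I_n) (vstar : 'cV[R]_n)
  (hmin : is_constrained_minimizer (reward_mx r lam - sym_mx P) sT vstar) :
  exists alpha : R,
    expv vstar = alpha *: (invmx (reward_mx r lam - sym_mx P) *m basis_vec R sT).
Proof.
set M := reward_mx r lam - sym_mx P.
have symM : M^T = M by rewrite linearB /= tr_reward_mx tr_sym_mx.
have lagrange := col_supported_at (constrained_minimizer_stationary symM hmin).
exists ((M *m expv vstar) sT 0).
by rewrite scalemxAr -lagrange mulKmx.
Qed.
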